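(* Let $\lambda(\beta,\theta,\gamma)$ be the Perron root associated to the generator $\mathcal{L}$ in the context. Then for all $\beta,\theta,\gamma>0$: $$\lambda(\beta,\theta+\delta,\gamma)\le\lambda(\beta,\theta,\gamma)-\delta\quad\text{for all }\delta>0,$$ $$\lambda(\beta,\theta-\delta,\gamma)\ge\lambda(\beta,\theta,\gamma)+\delta\quad\text{for all }\delta\in(0,\theta).$$
   Context: For parameters $\beta,\theta,\gamma>0$, $\mathcal{L}f(n)=\beta n(f(n+1)-f(n))-\theta nf(n)+\sum_{j=1}^{n-1}\frac{\gamma n}{j(j+1)}(f(j)+f(n-j)-f(n))$ on functions $f:\mathbb{N}_+\to\mathbb{R}$; it generates the first moment semigroup $(M_t)$ of the active cluster-size process of the GFI process (a cluster of size $n$ is isolated at rate $\theta n$, grows at rate $\beta n$, splits into sizes $n-j,j$ at rate $\gamma n/(j(j+1))$). The Perron root $\lambda(\beta,\theta,\gamma)$ is the unique real number for which there exist a probability vector $\pi>0$ on $\mathbb{N}_+$ and a positive function $h$ bounded above and below by positive constants with $\pi M_t=e^{\lambda t}\pi$ and $M_th=e^{\lambda t}h$ for all $t\ge0$. *)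

From Stdlib Require Import Reals.
From Coquelicot Require Import Coquelicot.
Open Scope R_scope.

(* Cluster sizes are the natural numbers n >= 1; values at index 0 are ignored. *)

Definition Lgen (beta theta gamma : R) (f : nat -> R) (n : nat) : R :=
  beta * INR n * (f (S n) - f n) - theta * INR n * f n
  + sum_n_m (fun j : nat => gamma * INR n / (INR j * INR (S j))
                            * (f j + f (n - j)%nat - f n)) 1 (n - 1).

Definition solves_backward (beta theta gamma : R) (M : R -> nat -> nat -> R) : Prop :=
  (forall n m : nat, (1 <= n)%nat -> (1 <= m)%nat ->
     M 0 n m = if Nat.eqb n m then 1 else 0) /\
  (forall n m : nat, (1 <= n)%nat -> (1 <= m)%nat ->
     filterlim (fun t => M t n m) (at_right 0) (locally (M 0 n m))) /\
  (forall (t : R) (n m : nat), 0 < t -> (1 <= n)%nat -> (1 <= m)%nat ->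
     is_derive (fun s => M s n m) t (Lgen beta theta gamma (fun k => M t k m) n)).

Definition nonneg_kernel (M : R -> nat -> nat -> R) : Prop :=
  forall (t : R) (n m : nat), 0 <= t -> (1 <= n)%nat -> (1 <= m)%nat -> 0 <= M t n m.

(* The first moment semigroup (M_t) generated by L: the minimal nonnegative
   solution of the backward equation (Feller's minimal solution, which is the
   expectation kernel of the active cluster-size process). *)
Definition first_moment_semigroup (beta theta gamma : R) (M : R -> nat -> nat -> R) : Prop :=
  solves_backward beta theta gamma M /\ nonneg_kernel M /\
  (forall N : R -> nat -> nat -> R,
     solves_backward beta theta gamma N -> nonneg_kernel N ->
     forall (t : R) (n m : nat), 0 <= t -> (1 <= n)%nat -> (1 <= m)%nat ->
       M t n m <= N t n m).

Definition Perron_root (beta theta gamma lam : R) : Prop :=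
  exists M : R -> nat -> nat -> R,
    first_moment_semigroup beta theta gamma M /\
    exists (pi h : nat -> R),
      (forall n : nat, (1 <= n)%nat -> 0 < pi n) /\
      is_series (fun k : nat => pi (S k)) 1 /\
      (exists c C : R, 0 < c /\ 0 < C /\
         forall n : nat, (1 <= n)%nat -> c <= h n <= C) /\
      (forall (t : R) (m : nat), 0 <= t -> (1 <= m)%nat ->
         is_series (fun k : nat => pi (S k) * M t (S k) m) (exp (lam * t) * pi m)) /\
      (forall (t : R) (n : nat), 0 <= t -> (1 <= n)%nat ->
         is_series (fun k : nat => M t n (S k) * h (S k)) (exp (lam * t) * h n)).

From Stdlib Require Import Reals Lra Lia Classical.
From Coquelicot Require Import Coquelicot.
Open Scope R_scope.

(* Raising the isolation rate by δ adds the potential -δ n <= -δ to the generator, so a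
   maximum principle for the backward equation gives e^{δt} M^{θ+δ}_t <= M^θ_t entrywise.
   It is run on w = e^{δt} M^{θ+δ} - M^θ - ε e^{(β+1)t} n, which is negative at t = 0 and,
   because M^{θ+δ} stays bounded on compact time intervals (its right eigenfunction is
   bounded below), also for large n; at a first zero of w the growth and fragmentation
   terms of L_θ w are <= 0, so w would be decreasing there.  Pairing the entrywise bound
   with the bounded right eigenfunctions gives e^{(λ(θ+δ) + δ - λ(θ)) t} <= const for all t,
   hence λ(θ+δ) <= λ(θ) - δ; the second inequality is the first one taken at θ - δ. *)

Lemma is_series_le (a b : nat -> R) (la lb : R) :
  (forall n, a n <= b n) -> is_series a la -> is_series b lb -> la <= lb.
Proof.
  intros Hab Ha Hb.
  exact (is_lim_seq_le (sum_n a) (sum_n b) la lb (fun n => sum_n_m_le a b 0 n Hab) Ha Hb).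
Qed.

Lemma sum_n_ge_last (a : nat -> R) (k : nat) :
  (forall n, 0 <= a n) -> a k <= sum_n a k.
Proof.
  intros Ha.
  assert (Hsum : forall j, 0 <= sum_n a j).
  { induction j as [|j IHj]; [rewrite sum_O; apply Ha|].
    rewrite sum_Sn; specialize (Ha (S j)); unfold plus; simpl; lra. }
  destruct k as [|k]; [rewrite sum_O; lra|].
  rewrite sum_Sn; specialize (Hsum k); unfold plus; simpl; lra.
Qed.

Lemma is_series_ge_term (a : nat -> R) (l : R) (k : nat) :
  (forall n, 0 <= a n) -> is_series a l -> a k <= l.
Proof.
  intros Ha Hl.
  apply Rle_trans with (sum_n a k); [now apply sum_n_ge_last|].
  apply (is_lim_seq_incr_compare _ _ Hl).
  intros n; rewrite sum_Sn; specialize (Ha (S n)); unfold plus; simpl; lra.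
Qed.

Lemma sum_n_m_nonpos (a : nat -> R) (n m : nat) :
  (forall k, (n <= k <= m)%nat -> a k <= 0) -> sum_n_m a n m <= 0.
Proof.
  intros Ha.
  rewrite (sum_n_m_ext_loc a (fun k => Rmin (a k) 0))
    by (intros k Hk; symmetry; apply Rmin_left, Ha, Hk).
  apply Rle_trans with (sum_n_m (fun _ => 0) n m).
  - apply sum_n_m_le; intros k; apply Rmin_r.
  - rewrite sum_n_m_const; lra.
Qed.

Lemma sum_n_m_lincomb (u v w : nat -> R) (a c : R) (n m : nat) :
  sum_n_m (fun j => a * u j - v j - c * w j) n m
  = a * sum_n_m u n m - sum_n_m v n m - c * sum_n_m w n m.
Proof.
  rewrite (sum_n_m_ext _ (fun j => plus (plus (mult a (u j)) (mult (-1) (v j))) (mult (-c) (w j))))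
    by (intros j; unfold plus, mult; simpl; ring).
  rewrite !sum_n_m_plus, !sum_n_m_mult_l; unfold plus, mult; simpl.
  change (@sum_n_m (Ring.AbelianMonoid R_Ring)) with (@sum_n_m R_AbelianMonoid).
  ring.
Qed.

Lemma exp_le_compat (x y : R) : x <= y -> exp x <= exp y.
Proof. intros [Hlt| ->]; [left; now apply exp_increasing|lra]. Qed.

Lemma exp_linear_bounded_nonpos (a A : R) :
  (forall t, 0 <= t -> exp (a * t) <= A) -> a <= 0.
Proof.
  intros Hbound.
  assert (HA : 1 <= A) by (rewrite <- exp_0, <- (Rmult_0_r a); apply Hbound; lra).
  destruct (Rle_or_lt a 0) as [Ha|Ha]; [exact Ha|exfalso].
  specialize (Hbound (A / a) ltac:(apply Rlt_le, Rdiv_lt_0_compat; lra)).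
  replace (a * (A / a)) with A in Hbound by (field; lra).
  pose proof (exp_ineq1 A ltac:(lra)); lra.
Qed.

Lemma is_derive_ge0_at_left_max (f : R -> R) (a t0 D : R) :
  a < t0 -> (forall s, a <= s < t0 -> f s <= f t0) -> is_derive f t0 D -> 0 <= D.
Proof.
  intros Hat0 Hmax Hder.
  destruct (Rle_or_lt 0 D) as [HD|HD]; [exact HD|exfalso].
  apply is_derive_Reals in Hder.
  destruct (Hder (- D) ltac:(lra)) as [del Hdel].
  pose proof (cond_pos del) as Hdel_pos.
  set (h := - Rmin (del / 2) ((t0 - a) / 2)).
  assert (Hmin1 := Rmin_l (del / 2) ((t0 - a) / 2)).
  assert (Hmin2 := Rmin_r (del / 2) ((t0 - a) / 2)).
  assert (Hh : 0 < - h) by (unfold h; rewrite Ropp_involutive; apply Rmin_pos; lra).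
  specialize (Hdel h ltac:(lra) ltac:(rewrite Rabs_left; unfold h in *; lra)).
  assert (Hquot : 0 <= (f (t0 + h) - f t0) / h).
  { assert (Hle : f (t0 + h) <= f t0) by (apply Hmax; unfold h in *; lra).
    assert (Hinv : / h < 0) by (apply Rinv_lt_0_compat; lra).
    unfold Rdiv; nra. }
  apply Rabs_def2 in Hdel; lra.
Qed.

Lemma filterlim_Rmult {T} (F : (T -> Prop) -> Prop) {FF : Filter F} (f g : T -> R) (x y : R) :
  filterlim f F (locally x) -> filterlim g F (locally y) ->
  filterlim (fun s => f s * g s) F (locally (x * y)).
Proof. intros Hf Hg; exact (filterlim_comp_2 f g Rmult Hf Hg (@filterlim_mult R_AbsRing x y)). Qed.

Lemma filterlim_Rminus {T} (F : (T -> Prop) -> Prop) {FF : Filter F} (f g : T -> R) (x y : R) :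
  filterlim f F (locally x) -> filterlim g F (locally y) ->
  filterlim (fun s => f s - g s) F (locally (x - y)).
Proof.
  intros Hf Hg.
  apply (filterlim_comp_2 (H := locally (- y)) f (fun s => - g s) Rplus Hf).
  - exact (filterlim_comp _ _ _ g Ropp F (locally y) _ Hg
             (@filterlim_opp R_AbsRing R_NormedModule y)).
  - exact (@filterlim_plus R_AbsRing R_NormedModule x (- y)).
Qed.

Lemma filterlim_eventually_lt0 {T} (F : (T -> Prop) -> Prop) (f : T -> R) (y : R) :
  filterlim f F (locally y) -> y < 0 -> F (fun s => f s < 0).
Proof. intros Hf Hy; exact (Hf _ (open_lt 0 y Hy)). Qed.

Lemma filterlim_eventually_gt0 {T} (F : (T -> Prop) -> Prop) (f : T -> R) (y : R) :
  filterlim f F (locally y) -> 0 < y -> F (fun s => 0 < f s).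
Proof. intros Hf Hy; exact (Hf _ (open_gt 0 y Hy)). Qed.

Lemma filter_forall_bounded {T} (F : (T -> Prop) -> Prop) {FF : Filter F}
    (P : nat -> T -> Prop) (N : nat) :
  (forall n, (1 <= n <= N)%nat -> F (P n)) ->
  F (fun x => forall n, (1 <= n <= N)%nat -> P n x).
Proof.
  induction N as [|N IH]; intros HP.
  - apply filter_forall; intros x n Hn; lia.
  - generalize (filter_and (F := F) _ _ (IH (fun n Hn => HP n ltac:(lia))) (HP (S N) ltac:(lia))).
    apply filter_imp; intros x [Hle HN] n Hn.
    destruct (Nat.eq_dec n (S N)) as [ ->|Hne]; [exact HN|apply Hle; lia].
Qed.

Lemma locally_Rabs (t : R) (P : R -> Prop) :
  locally t P -> exists e, 0 < e /\ forall s, Rabs (s - t) < e -> P s.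
Proof. intros [e He]; exists e; split; [apply cond_pos|intros s Hs; apply He, Hs]. Qed.

Lemma Lgen_shift_theta (b th dl g : R) (f : nat -> R) (n : nat) :
  Lgen b (th + dl) g f n = Lgen b th g f n - dl * INR n * f n.
Proof. unfold Lgen; ring. Qed.

Lemma Lgen_lincomb (b th g : R) (f1 f2 f3 : nat -> R) (a c : R) (n : nat) :
  Lgen b th g (fun k => a * f1 k - f2 k - c * f3 k) n
  = a * Lgen b th g f1 n - Lgen b th g f2 n - c * Lgen b th g f3 n.
Proof.
  unfold Lgen.
  rewrite (sum_n_m_ext _ (fun j =>
     a * (g * INR n / (INR j * INR (S j)) * (f1 j + f1 (n - j)%nat - f1 n))
     - (g * INR n / (INR j * INR (S j)) * (f2 j + f2 (n - j)%nat - f2 n))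
     - c * (g * INR n / (INR j * INR (S j)) * (f3 j + f3 (n - j)%nat - f3 n))))
    by (intros j; simpl; unfold Rdiv; ring).
  rewrite sum_n_m_lincomb; ring.
Qed.

Lemma Lgen_INR (b th g : R) (n : nat) : (1 <= n)%nat ->
  Lgen b th g INR n = b * INR n - th * INR n * INR n.
Proof.
  intros Hn; unfold Lgen.
  rewrite (sum_n_m_ext_loc _ (fun _ => 0))
    by (intros j Hj; simpl; rewrite minus_INR by lia; ring).
  rewrite sum_n_m_const, S_INR; ring.
Qed.

Lemma Lgen_nonpos_at_zero_max (b th g : R) (f : nat -> R) (n : nat) :
  0 <= b -> 0 <= g -> (1 <= n)%nat -> f n = 0 -> (forall k, (1 <= k)%nat -> f k <= 0) ->
  Lgen b th g f n <= 0.
Proof.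
  intros Hb Hg Hn Hfn Hf; unfold Lgen; rewrite Hfn.
  assert (Hfrag : sum_n_m (fun j => g * INR n / (INR j * INR (S j)) * (f j + f (n - j)%nat - 0))
                    1 (n - 1) <= 0).
  { apply sum_n_m_nonpos; intros j Hj.
    assert (Hrate : 0 <= g * INR n / (INR j * INR (S j))).
    { apply Rdiv_le_0_compat; [apply Rmult_le_pos; [exact Hg|apply pos_INR]|].
      apply Rmult_lt_0_compat; apply lt_0_INR; lia. }
    assert (f j <= 0) by (apply Hf; lia).
    assert (f (n - j)%nat <= 0) by (apply Hf; lia).
    nra. }
  assert (f (S n) <= 0) by (apply Hf; lia).
  assert (0 <= b * INR n) by (apply Rmult_le_pos; [exact Hb|apply pos_INR]).
  nra.
Qed.

Section FirstCrossing.

Variables (w : R -> nat -> R) (N : nat) (t1 : R).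
Hypothesis w_neg_at0 : forall n, (1 <= n <= N)%nat -> w 0 n < 0.
Hypothesis w_right_cont0 :
  forall n, (1 <= n <= N)%nat -> filterlim (fun s => w s n) (at_right 0) (locally (w 0 n)).
Hypothesis w_cont : forall t n, 0 < t -> (1 <= n <= N)%nat -> continuous (fun s => w s n) t.

Definition negative_up_to (t : R) : Prop :=
  0 <= t <= t1 /\ forall s n, 0 <= s <= t -> (1 <= n <= N)%nat -> w s n < 0.

Section AtSupremum.

Variable t0 : R.
Hypothesis t0_lub : is_lub negative_up_to t0.
Hypothesis t1_pos : 0 < t1.

Lemma t0_le_t1 : t0 <= t1.
Proof. apply t0_lub; intros x [Hx _]; lra. Qed.

Lemma negative_before_t0 (s : R) (n : nat) : 0 <= s < t0 -> (1 <= n <= N)%nat -> w s n < 0.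
Proof.
  intros Hs Hn.
  destruct (classic (exists e, negative_up_to e /\ s < e)) as [[e [[_ He] Hse]]|Hno].
  - apply He; [lra|exact Hn].
  - enough (t0 <= s) by lra.
    apply t0_lub; intros x Hx.
    apply Rnot_lt_le; intros Hsx; apply Hno; eauto.
Qed.

Lemma t0_pos : 0 < t0.
Proof.
  assert (Hev := filter_forall_bounded (at_right 0) (fun n s => w s n < 0) N
    (fun n Hn => filterlim_eventually_lt0 _ _ _ (w_right_cont0 n Hn) (w_neg_at0 n Hn))).
  unfold at_right, within in Hev.
  destruct (locally_Rabs 0 _ Hev) as [e [He Hball]].
  set (s0 := Rmin (e / 2) t1).
  assert (Hs0e : s0 <= e / 2) by apply Rmin_l.
  assert (Hs0t : s0 <= t1) by apply Rmin_r.
  assert (Hs0 : 0 < s0) by (apply Rmin_pos; lra).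
  enough (s0 <= t0) by lra.
  apply t0_lub; split; [lra|].
  intros s n Hs Hn.
  destruct (Req_dec s 0) as [->|Hs_ne]; [now apply w_neg_at0|].
  apply Hball; [rewrite Rminus_0_r, Rabs_right; lra|lra|exact Hn].
Qed.

Lemma nonpos_at_t0 (n : nat) : (1 <= n <= N)%nat -> w t0 n <= 0.
Proof.
  intros Hn; apply Rnot_lt_le; intros Hpos.
  destruct (locally_Rabs t0 _
    (filterlim_eventually_gt0 _ _ _ (w_cont t0 n t0_pos Hn) Hpos)) as [e [He Hball]].
  set (s := Rmax (t0 / 2) (t0 - e / 2)).
  assert (Hs1 : t0 / 2 <= s) by apply Rmax_l.
  assert (Hs2 : t0 - e / 2 <= s) by apply Rmax_r.
  assert (Hs3 : s < t0) by (apply Rmax_lub_lt; pose proof t0_pos; lra).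
  assert (0 < w s n) by (apply Hball; rewrite Rabs_left; lra).
  assert (w s n < 0) by (apply negative_before_t0; [pose proof t0_pos; lra|exact Hn]).
  lra.
Qed.

Lemma vanishes_at_t0 (n1 : nat) : (1 <= n1 <= N)%nat -> 0 <= w t1 n1 ->
  exists ns, (1 <= ns <= N)%nat /\ w t0 ns = 0.
Proof.
  intros Hn1 Hw1.
  destruct (classic (exists ns, (1 <= ns <= N)%nat /\ 0 <= w t0 ns)) as [[ns [Hns Hw]]|Hno].
  { exists ns; split; [exact Hns|]. pose proof (nonpos_at_t0 ns Hns); lra. }
  exfalso.
  assert (Hneg : forall n, (1 <= n <= N)%nat -> w t0 n < 0)
    by (intros n Hn; apply Rnot_le_lt; intros Hw; apply Hno; eauto).
  destruct (Req_dec t0 t1) as [Heq|Hne].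
  { subst t0; specialize (Hneg n1 Hn1); lra. }
  pose proof t0_pos; pose proof t0_le_t1.
  assert (Hev := filter_forall_bounded (locally t0) (fun n s => w s n < 0) N
    (fun n Hn => filterlim_eventually_lt0 _ _ _ (w_cont t0 n t0_pos Hn) (Hneg n Hn))).
  destruct (locally_Rabs t0 _ Hev) as [e [He Hball]].
  set (s1 := Rmin (t0 + e / 2) t1).
  assert (Hs1e : s1 <= t0 + e / 2) by apply Rmin_l.
  assert (Hs1t : s1 <= t1) by apply Rmin_r.
  assert (Hs1 : t0 < s1) by (apply Rmin_glb_lt; lra).
  enough (s1 <= t0) by lra.
  apply t0_lub; split; [lra|].
  intros s n Hs Hn.
  destruct (Rlt_or_le s t0) as [Hst|Hst].
  - apply negative_before_t0; [lra|exact Hn].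
  - apply Hball; [rewrite Rabs_right; lra|exact Hn].
Qed.

End AtSupremum.

Lemma first_crossing (n1 : nat) :
  0 <= t1 -> (1 <= n1 <= N)%nat -> 0 <= w t1 n1 ->
  exists t0 ns, 0 < t0 <= t1 /\ (1 <= ns <= N)%nat /\ w t0 ns = 0 /\
    (forall n, (1 <= n <= N)%nat -> w t0 n <= 0) /\
    (forall s, 0 <= s < t0 -> w s ns < 0).
Proof.
  intros Ht1 Hn1 Hw1.
  assert (Ht1_pos : 0 < t1).
  { destruct Ht1 as [Ht1| <-]; [exact Ht1|]. specialize (w_neg_at0 n1 Hn1); lra. }
  assert (Hinh : exists t, negative_up_to t).
  { exists 0; split; [lra|]. intros s n Hs Hn. replace s with 0 by lra. now apply w_neg_at0. }
  assert (Hbnd : bound negative_up_to) by (exists t1; intros x [Hx _]; lra).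
  destruct (completeness _ Hbnd Hinh) as [t0 Hlub].
  destruct (vanishes_at_t0 t0 Hlub Ht1_pos n1 Hn1 Hw1) as [ns [Hns Hzero]].
  exists t0, ns; split; [|split; [|split; [|split]]].
  - split; [exact (t0_pos t0 Hlub Ht1_pos)|exact (t0_le_t1 t0 Hlub)].
  - exact Hns.
  - exact Hzero.
  - exact (nonpos_at_t0 t0 Hlub Ht1_pos).
  - intros s Hs; exact (negative_before_t0 t0 Hlub s ns Hs Hns).
Qed.

End FirstCrossing.

Definition columns_bounded_on_compacts (M : R -> nat -> nat -> R) : Prop :=
  forall m, (1 <= m)%nat -> forall T, 0 <= T ->
    exists B, forall t n, 0 <= t <= T -> (1 <= n)%nat -> M t n m <= B.

Section Comparison.

Variables (b th dl g : R) (M M' : R -> nat -> nat -> R).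
Hypotheses (b_ge0 : 0 <= b) (th_ge0 : 0 <= th) (g_ge0 : 0 <= g) (dl_ge0 : 0 <= dl).
Hypotheses (M_backward : solves_backward b th g M) (M_nonneg : nonneg_kernel M).
Hypotheses (M'_backward : solves_backward b (th + dl) g M') (M'_nonneg : nonneg_kernel M').
Hypothesis M'_bounded : columns_bounded_on_compacts M'.
Variables (m : nat) (eps : R).
Hypotheses (m_ge1 : (1 <= m)%nat) (eps_pos : 0 < eps).

(* The rate [b + 1] beats [Lgen b th g INR n <= b * INR n], making the penalty a strict
   supersolution. *)
Definition gap (t : R) (n : nat) : R :=
  exp (dl * t) * M' t n m - M t n m - eps * exp ((b + 1) * t) * INR n.

Definition gap_rate (t : R) (n : nat) : R :=
  exp (dl * t) * Lgen b th g (fun k => M' t k m) n - Lgen b th g (fun k => M t k m) n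
  - dl * exp (dl * t) * (INR n - 1) * M' t n m - eps * (b + 1) * exp ((b + 1) * t) * INR n.

Lemma gap_at0 (n : nat) : (1 <= n)%nat -> gap 0 n < 0.
Proof.
  intros Hn; destruct M_backward as [HM0 _]; destruct M'_backward as [HM'0 _].
  unfold gap; rewrite HM0, HM'0 by assumption; rewrite !Rmult_0_r, exp_0.
  assert (0 < INR n) by (apply lt_0_INR; lia).
  nra.
Qed.

Lemma gap_right_cont0 (n : nat) : (1 <= n)%nat ->
  filterlim (fun s => gap s n) (at_right 0) (locally (gap 0 n)).
Proof.
  intros Hn; destruct M_backward as [_ [HMc _]]; destruct M'_backward as [_ [HM'c _]].
  assert (Hexp : forall c,
            filterlim (fun s => exp (c * s)) (at_right 0) (locally (exp (c * 0)))).
  { intros c; apply (filterlim_filter_le_1 _ (filter_le_within _)).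
    apply (ex_derive_continuous (fun s => exp (c * s))); auto_derive; auto. }
  set (F := at_right 0).
  unfold gap; apply (filterlim_Rminus F); [apply (filterlim_Rminus F)|].
  - apply (filterlim_Rmult F); [apply Hexp|now apply HM'c].
  - now apply HMc.
  - apply (filterlim_Rmult F); [apply (filterlim_Rmult F); [apply filterlim_const|apply Hexp]|].
    apply filterlim_const.
Qed.

Lemma gap_derive (t : R) (n : nat) : 0 < t -> (1 <= n)%nat ->
  is_derive (fun s => gap s n) t (gap_rate t n).
Proof.
  intros Ht Hn; destruct M_backward as [_ [_ HMd]]; destruct M'_backward as [_ [_ HM'd]].
  assert (Hexp : is_derive (fun s => exp (dl * s)) t (dl * exp (dl * t)))
    by (auto_derive; [auto|ring]).
  assert (Hpen : is_derive (fun s => eps * exp ((b + 1) * s) * INR n) t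
                   (eps * (b + 1) * exp ((b + 1) * t) * INR n))
    by (auto_derive; [auto|ring]).
  pose proof (is_derive_minus _ _ t _ _
    (is_derive_minus _ _ t _ _
       (is_derive_mult _ _ t _ _ Hexp (HM'd t n m Ht Hn m_ge1) Rmult_comm)
       (HMd t n m Ht Hn m_ge1)) Hpen) as Hd.
  match type of Hd with is_derive _ _ ?D => replace (gap_rate t n) with D; [exact Hd|] end.
  unfold gap_rate, minus, plus, opp, mult; simpl.
  rewrite Lgen_shift_theta; ring.
Qed.

Lemma gap_continuous (t : R) (n : nat) : 0 < t -> (1 <= n)%nat ->
  continuous (fun s => gap s n) t.
Proof.
  intros Ht Hn; apply (ex_derive_continuous (fun s => gap s n)).
  eexists; now apply gap_derive.
Qed.

Lemma gap_rate_neg_at_max (t : R) (n : nat) : 0 < t -> (1 <= n)%nat ->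
  gap t n = 0 -> (forall k, (1 <= k)%nat -> gap t k <= 0) -> gap_rate t n < 0.
Proof.
  intros Ht Hn Hzero Hmax.
  assert (HL : exp (dl * t) * Lgen b th g (fun k => M' t k m) n
               - Lgen b th g (fun k => M t k m) n
               - eps * exp ((b + 1) * t) * Lgen b th g INR n <= 0).
  { rewrite <- Lgen_lincomb; apply Lgen_nonpos_at_zero_max; auto. }
  rewrite Lgen_INR in HL by exact Hn.
  unfold gap_rate.
  set (c := eps * exp ((b + 1) * t)) in *.
  assert (Hc : 0 < c) by (apply Rmult_lt_0_compat; [exact eps_pos|apply exp_pos]).
  assert (Hx : 1 <= INR n) by (apply (le_INR 1); lia).
  assert (Hy : 0 <= exp (dl * t) * M' t n m)
    by (apply Rmult_le_pos; [left; apply exp_pos|apply M'_nonneg; lia || lra]).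
  assert (0 <= dl * (exp (dl * t) * M' t n m) * (INR n - 1))
    by (apply Rmult_le_pos; [apply Rmult_le_pos|]; lra).
  assert (0 <= c * th * INR n * INR n)
    by (apply Rmult_le_pos; [apply Rmult_le_pos; [apply Rmult_le_pos|]|]; lra).
  replace (eps * (b + 1) * exp ((b + 1) * t) * INR n) with (c * b * INR n + c * INR n)
    by (unfold c; ring).
  nra.
Qed.

Lemma gap_neg_for_large_n (T : R) : 0 <= T ->
  exists N, forall t n, 0 <= t <= T -> (N < n)%nat -> gap t n < 0.
Proof.
  intros HT.
  destruct (M'_bounded m m_ge1 T HT) as [B HB].
  destruct (INR_unbounded (exp (dl * T) * B / eps)) as [N HN].
  exists N; intros t n Ht HgtN; unfold gap.
  assert (HM : 0 <= M t n m) by (apply M_nonneg; lra || lia).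
  assert (HM' : 0 <= M' t n m) by (apply M'_nonneg; lra || lia).
  assert (HM'B : M' t n m <= B) by (apply HB; lra || lia).
  assert (Hgrowth : exp (dl * t) * M' t n m <= exp (dl * T) * B).
  { apply Rmult_le_compat; [left; apply exp_pos|exact HM'| |exact HM'B].
    apply exp_le_compat, Rmult_le_compat_l; lra. }
  assert (HNeps : exp (dl * T) * B < eps * INR N).
  { replace (exp (dl * T) * B) with (eps * (exp (dl * T) * B / eps)) by (field; lra).
    apply Rmult_lt_compat_l; lra. }
  assert (HNn : INR N < INR n) by (apply lt_INR; exact HgtN).
  assert (Hpen : eps * INR n <= eps * exp ((b + 1) * t) * INR n).
  { assert (1 <= exp ((b + 1) * t))
      by (rewrite <- exp_0 at 1; apply exp_le_compat, Rmult_le_pos; lra).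
    assert (0 < eps * INR n) by (apply Rmult_lt_0_compat; [lra|pose proof (pos_INR N); lra]).
    nra. }
  nra.
Qed.

Lemma gap_neg (t : R) (n : nat) : 0 <= t -> (1 <= n)%nat -> gap t n < 0.
Proof.
  intros Ht Hn; apply Rnot_le_lt; intros Hpos.
  destruct (gap_neg_for_large_n t Ht) as [N HN].
  assert (HnN : (n <= N)%nat).
  { destruct (Nat.le_gt_cases n N) as [HnN|HNn]; [exact HnN|].
    specialize (HN t n ltac:(lra) HNn); lra. }
  destruct (first_crossing gap N t
              (fun k Hk => gap_at0 k (proj1 Hk))
              (fun k Hk => gap_right_cont0 k (proj1 Hk))
              (fun s k Hs Hk => gap_continuous s k Hs (proj1 Hk))
              n Ht ltac:(lia) Hpos)
    as [t0 [ns [[Ht0 Ht0t] [Hns [Hzero [Hmax Hbefore]]]]]].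
  assert (Hmax_all : forall k, (1 <= k)%nat -> gap t0 k <= 0).
  { intros k Hk; destruct (Nat.le_gt_cases k N) as [HkN|HkN]; [apply Hmax; lia|].
    left; apply HN; [lra|exact HkN]. }
  pose proof (gap_rate_neg_at_max t0 ns Ht0 ltac:(lia) Hzero Hmax_all).
  enough (0 <= gap_rate t0 ns) by lra.
  apply (is_derive_ge0_at_left_max (fun s => gap s ns) 0 t0); [exact Ht0| |].
  - intros s Hs; rewrite Hzero; left; exact (Hbefore s Hs).
  - apply gap_derive; [exact Ht0|lia].
Qed.

End Comparison.

Lemma backward_comparison (b th dl g : R) (M M' : R -> nat -> nat -> R) :
  0 <= b -> 0 <= th -> 0 <= g -> 0 <= dl ->
  solves_backward b th g M -> nonneg_kernel M ->
  solves_backward b (th + dl) g M' -> nonneg_kernel M' -> columns_bounded_on_compacts M' ->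
  forall t n m, 0 <= t -> (1 <= n)%nat -> (1 <= m)%nat -> exp (dl * t) * M' t n m <= M t n m.
Proof.
  intros Hb Hth Hg Hdl HM HMn HM' HM'n HM'b t n m Ht Hn Hm.
  apply Rle_plus_epsilon; intros eps Heps.
  set (scale := exp ((b + 1) * t) * INR n).
  assert (Hscale : 0 < scale) by (apply Rmult_lt_0_compat; [apply exp_pos|apply lt_0_INR; lia]).
  pose proof (gap_neg b th dl g M M' Hb Hth Hg Hdl HM HMn HM' HM'n HM'b m (eps / scale) Hm
                ltac:(apply Rdiv_lt_0_compat; lra) t n Ht Hn) as Hgap.
  unfold gap in Hgap.
  replace (eps / scale * exp ((b + 1) * t) * INR n) with (eps / scale * scale) in Hgap
    by (unfold scale; ring).
  replace (eps / scale * scale) with eps in Hgap by (field; lra).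
  lra.
Qed.

Definition bounded_right_eigenfunction (M : R -> nat -> nat -> R) (lam : R) (h : nat -> R) : Prop :=
  (exists c C, 0 < c /\ 0 < C /\ forall n, (1 <= n)%nat -> c <= h n <= C) /\
  (forall t n, 0 <= t -> (1 <= n)%nat ->
     is_series (fun k => M t n (S k) * h (S k)) (exp (lam * t) * h n)).

Lemma Perron_root_right_eigenfunction (b th g lam : R) :
  Perron_root b th g lam ->
  exists M, solves_backward b th g M /\ nonneg_kernel M /\
    exists h, bounded_right_eigenfunction M lam h.
Proof.
  intros [M [[HM [HMn _]] [_ [h [_ [_ [Hh [_ Hright]]]]]]]].
  exists M; split; [exact HM|split; [exact HMn|]].
  exists h; split; [exact Hh|exact Hright].
Qed.

Lemma right_eigenfunction_columns_bounded (M : R -> nat -> nat -> R) (lam : R) (h : nat -> R) :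
  nonneg_kernel M -> bounded_right_eigenfunction M lam h -> columns_bounded_on_compacts M.
Proof.
  intros HMn [[c [C [Hc [HC Hh]]]] Hright] m Hm T HT.
  exists (exp (Rabs lam * T) * C / c); intros t n Ht Hn.
  destruct m as [|m]; [lia|].
  assert (HM : 0 <= M t n (S m)) by (apply HMn; lra || lia).
  assert (Hterm : M t n (S m) * h (S m) <= exp (lam * t) * h n).
  { apply (is_series_ge_term (fun k => M t n (S k) * h (S k))); [|apply Hright; lra || lia].
    intros k; apply Rmult_le_pos; [apply HMn; lra || lia|].
    destruct (Hh (S k)) as [Hk _]; [lia|lra]. }
  assert (Hexp : exp (lam * t) <= exp (Rabs lam * T)).
  { apply exp_le_compat, Rle_trans with (Rabs lam * t).
    - apply Rmult_le_compat_r; [lra|apply Rle_abs].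
    - apply Rmult_le_compat_l; [apply Rabs_pos|lra]. }
  destruct (Hh (S m)) as [Hhm _]; [lia|].
  destruct (Hh n) as [Hhn_lo Hhn]; [exact Hn|].
  apply (Rmult_le_reg_r c); [exact Hc|].
  replace (exp (Rabs lam * T) * C / c * c) with (exp (Rabs lam * T) * C) by (field; lra).
  apply Rle_trans with (M t n (S m) * h (S m)); [apply Rmult_le_compat_l; lra|].
  apply Rle_trans with (exp (lam * t) * h n); [exact Hterm|].
  apply Rmult_le_compat; [left; apply exp_pos|lra|exact Hexp|exact Hhn].
Qed.

Lemma eigenvalue_le_of_kernel_le (M M' : R -> nat -> nat -> R) (lam lam' dl : R)
    (h h' : nat -> R) :
  nonneg_kernel M' -> bounded_right_eigenfunction M lam h ->
  bounded_right_eigenfunction M' lam' h' ->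
  (forall t k, 0 <= t -> (1 <= k)%nat -> exp (dl * t) * M' t 1%nat k <= M t 1%nat k) ->
  lam' <= lam - dl.
Proof.
  intros HM'n [[c [C [Hc [HC Hh]]]] Hright] [[c' [C' [Hc' [HC' Hh']]]] Hright'] Hle.
  enough (lam' + dl - lam <= 0) by lra.
  apply (exp_linear_bounded_nonpos _ (C' * C / (c * c'))); intros t Ht.
  set (E := exp (dl * t)).
  assert (HE : 0 < E) by apply exp_pos.
  assert (Hsum : E * (exp (lam' * t) * h' 1%nat) <= C' / c * (exp (lam * t) * h 1%nat)).
  { apply (is_series_le (fun k => E * (M' t 1%nat (S k) * h' (S k)))
                        (fun k => C' / c * (M t 1%nat (S k) * h (S k)))).
    - intros k.
      assert (Hx : 0 <= M' t 1%nat (S k)) by (apply HM'n; lra || lia).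
      assert (HEx : E * M' t 1%nat (S k) <= M t 1%nat (S k)) by (apply Hle; lra || lia).
      destruct (Hh (S k)) as [Hhk _]; [lia|].
      destruct (Hh' (S k)) as [_ Hhk']; [lia|].
      assert (0 <= E * M' t 1%nat (S k)) by (apply Rmult_le_pos; lra).
      apply Rle_trans with (C' * (E * M' t 1%nat (S k))); [nra|].
      apply Rle_trans with (C' * M t 1%nat (S k)); [nra|].
      replace (C' / c * (M t 1%nat (S k) * h (S k)))
        with (C' * M t 1%nat (S k) * (h (S k) / c)) by (field; lra).
      assert (1 <= h (S k) / c) by (apply Rle_div_r; lra).
      assert (0 <= C' * M t 1%nat (S k)) by nra.
      nra.
    - exact (is_series_scal_l E _ _ (Hright' t 1%nat Ht (le_n 1))).
    - exact (is_series_scal_l (C' / c) _ _ (Hright t 1%nat Ht (le_n 1))). }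
  destruct (Hh 1%nat) as [_ Hh1]; [lia|].
  destruct (Hh' 1%nat) as [Hh1' _]; [lia|].
  replace ((lam' + dl - lam) * t) with (dl * t + lam' * t + - (lam * t)) by ring.
  rewrite !exp_plus, exp_Ropp; fold E.
  assert (Hl : 0 < exp (lam * t)) by apply exp_pos.
  assert (Hl' : 0 < exp (lam' * t)) by apply exp_pos.
  apply (Rmult_le_reg_r (exp (lam * t) * c')); [nra|].
  replace (E * exp (lam' * t) * / exp (lam * t) * (exp (lam * t) * c'))
    with (E * (exp (lam' * t) * c')) by (field; lra).
  replace (C' * C / (c * c') * (exp (lam * t) * c')) with (C' / c * (exp (lam * t) * C))
    by (field; lra).
  apply Rle_trans with (E * (exp (lam' * t) * h' 1%nat)); [apply Rmult_le_compat_l; nra|].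
  apply Rle_trans with (C' / c * (exp (lam * t) * h 1%nat)); [exact Hsum|].
  apply Rmult_le_compat_l; [apply Rlt_le, Rdiv_lt_0_compat; lra|nra].
Qed.

Lemma Perron_root_shift_theta_le (b th g dl lam lam' : R) :
  0 <= b -> 0 <= th -> 0 <= g -> 0 <= dl ->
  Perron_root b th g lam -> Perron_root b (th + dl) g lam' -> lam' <= lam - dl.
Proof.
  intros Hb Hth Hg Hdl HP HP'.
  destruct (Perron_root_right_eigenfunction _ _ _ _ HP) as [M [HM [HMn [h Hh]]]].
  destruct (Perron_root_right_eigenfunction _ _ _ _ HP') as [M' [HM' [HM'n [h' Hh']]]].
  apply (eigenvalue_le_of_kernel_le M M' lam lam' dl h h' HM'n Hh Hh').
  intros t k Ht Hk.
  apply (backward_comparison b th dl g M M'); try assumption; try lia.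
  exact (right_eigenfunction_columns_bounded M' lam' h' HM'n Hh').
Qed.

Theorem lemma6p3 (beta theta gamma : R) :
  0 < beta -> 0 < theta -> 0 < gamma ->
  (forall delta lam lam' : R, 0 < delta ->
     Perron_root beta theta gamma lam ->
     Perron_root beta (theta + delta) gamma lam' ->
     lam' <= lam - delta) /\
  (forall delta lam lam' : R, 0 < delta < theta ->
     Perron_root beta theta gamma lam ->
     Perron_root beta (theta - delta) gamma lam' ->
     lam' >= lam + delta).
Proof.
  intros Hbeta Htheta Hgamma; split.
  - intros delta lam lam' Hdelta HP HP'.
    apply (Perron_root_shift_theta_le beta theta gamma); lra || assumption.
  - intros delta lam lam' [Hdelta Hdelta_theta] HP HP'.
    replace theta with (theta - delta + delta) in HP by ring.
    enough (lam <= lam' - delta) by lra.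
    apply (Perron_root_shift_theta_le beta (theta - delta) gamma); lra || assumption.
Qed.
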